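(* Let $w\in\mathcal{W}^o_n$ and let $(O,E)\to(O',E')$ be one application of the step $(\psi)$ during the computation of $\Psi(w)$, with $O=o_1|\cdots|o_m$ and (when $o_m$ is splittable) $o_m=rs$ its standard factorization, as in the definition of $(\psi)$. Let $O'=o'_1|\cdots|o'_h$ be the Lyndon factorization of $O'$, with the convention $o'_i=\infty$ for $i\le0$. Then: (i) The Lyndon factors of $O'$ are odd and pairwise distinct, and the Lyndon factorization of $O'$ is $o_1|\cdots|o_{m-1}|r$ after a step of type (S), $o_1|\cdots|o_{m-1}|s$ after a step of type (P), and $o_1|\cdots|o_{m-2}$ after a step of type (F). (ii) $E'<o'_{h-1}$. (iii) After a step of type (F), $E'<o'_h$. (iv) After a step of type (P), $E'<o'_h$ and $E<o'_h$. (v) After a step of type (S), $s$ is the leftmost Lyndon factor of $E'$, and $o'_h<s\le E'$. (vi) All the Lyndon factors of $E'$ are even. Moreover, writing $E'=\ell E$ (so $\ell=s$, $r$, or $o_mo_{m-1}$ in cases (S), (P), (F) respectively), the word $\ell$ is contained in the leftmost Lyndon factor of $E'$ (i.e., $|\ell|$ is at most the length of that factor).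
   Context: Fix a finite totally ordered alphabet $A$. Words are finite sequences over $A$; $-$ is the empty word; $\mathcal{W}_n$ is the set of words of length $n$. $<$ is lexicographic order (a proper prefix is smaller than the word); $\infty$ is a formal symbol with $w<\infty$ for all words $w$. A Lyndon word is a nonempty word strictly smaller than each of its proper nonempty suffixes. Every word has a unique Lyndon factorization $w=\ell_1\cdots\ell_m$ into Lyndon words with $\ell_1\ge\dots\ge\ell_m$, written $\ell_1|\cdots|\ell_m$; the $\ell_i$ are the Lyndon factors. Odd/even refer to lengths. For a Lyndon word $\ell$ with $|\ell|\ge2$, its standard factorization is $\ell=rs$ with $s$ the longest proper suffix of $\ell$ that is Lyndon (equivalently the smallest proper nonempty suffix). $\mathcal{W}^o_n$: words of length $n$ whose Lyndon factors are all odd and pairwise distinct. Computation of $\Psi(w)$ for $w\in\mathcal{W}^o_n$: start with $(O,E)=(w,-)$. While $|O|\ge2$, apply step $(\psi)$: let $O=o_1|\cdots|o_m$ be its Lyndon factorization (with $o_{m-1}=\infty$ if $m=1$). Call $o_m$ splittable if $|o_m|\ge2$ and its standard factorization $o_m=rs$ satisfies $s<o_{m-1}$. Update $(O,E)$ to: (S) $(o_1\cdots o_{m-1}r,\ sE)$ if $o_m$ is splittable and $r$ is odd; (P) $(o_1\cdots o_{m-1}s,\ rE)$ if $o_m$ is splittable and $r$ is even; (F) $(o_1\cdots o_{m-2},\ o_mo_{m-1}E)$ if $o_m$ is not splittable. (If $|O|=1$ is reached, that letter is inserted into $E$ as a new Lyndon factor keeping factors weakly decreasing; this final move is not a step $(\psi)$.)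 When $O$ is empty, $\Psi(w)=E$. *)

From mathcomp Require Import all_boot all_order.
Set Implicit Arguments. Unset Strict Implicit. Unset Printing Implicit Defensive.
Import Order.TTheory.

Section Words.
Context {d : Order.disp_t} {A : finOrderType d}.

Definition word := seq A.

Fixpoint lexlt (u v : word) : bool :=
  match u, v with
  | [::], [::] => false
  | [::], _ :: _ => true
  | _ :: _, [::] => false
  | a :: u', b :: v' => (a < b)%O || ((a == b) && lexlt u' v')
  end.

Definition lexle (u v : word) : bool := (u == v) || lexlt u v.

(* words extended with the formal symbol oo (= None), larger than every word *)
Definition olt (x y : option word) : bool :=
  match x, y with
  | Some u, Some v => lexlt u v
  | Some _, None => true
  | None, _ => false
  end.

Definition lyndon (u : word) : bool :=
  (u != [::]) && all (fun k => lexlt u (drop k u)) (iota 1 (size u).-1).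

Definition lfact (w : word) (fs : seq word) : bool :=
  [&& all lyndon fs, sorted (fun x y => lexle y x) fs & flatten fs == w].

(* 1-based access to factors, with o_i = oo for i <= 0 *)
Definition oidx (fs : seq word) (i : nat) : option word :=
  if i is 0 then None else Some (nth [::] fs i.-1).

Definition oddw (u : word) : bool := odd (size u).

Definition Wo (n : nat) (w : word) : Prop :=
  size w = n /\ exists fs, [&& lfact w fs, all oddw fs & uniq fs].

Definition std_fact (l r s : word) : Prop :=
  [/\ l = r ++ s, r != [::], s != [::], lyndon s &
      forall k, 0 < k < size l -> lyndon (drop k l) -> size (drop k l) <= size s].

Definition splittable (om : word) (prev : option word) : Prop :=
  2 <= size om /\ exists r s, std_fact om r s /\ olt (Some s) prev.

Inductive kind := KS of word & word | KP of word & word | KF.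

(* One step (psi) applied to (O,E) where fs is the Lyndon factorization of O:
   psi_data fs E O' E' l k  means  (O,E) -> (O',E') with E' = l ++ E, of kind k *)
Inductive psi_data (fs : seq word) (E : word) : word -> word -> word -> kind -> Prop :=
| PsiS r s : std_fact (last [::] fs) r s -> olt (Some s) (oidx fs (size fs).-1) ->
    odd (size r) ->
    psi_data fs E (flatten (take (size fs).-1 fs) ++ r) (s ++ E) s (KS r s)
| PsiP r s : std_fact (last [::] fs) r s -> olt (Some s) (oidx fs (size fs).-1) ->
    ~~ odd (size r) ->
    psi_data fs E (flatten (take (size fs).-1 fs) ++ s) (r ++ E) r (KP r s)
| PsiF : 2 <= size fs -> ~ splittable (last [::] fs) (oidx fs (size fs).-1) ->
    psi_data fs E (flatten (take (size fs - 2) fs))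
      (last [::] fs ++ nth [::] fs (size fs - 2) ++ E)
      (last [::] fs ++ nth [::] fs (size fs - 2)) KF.

Definition psi_step (O E O' E' : word) : Prop :=
  2 <= size O /\ exists fs l k, lfact O fs /\ psi_data fs E O' E' l k.

Inductive reach (w : word) : word -> word -> Prop :=
| reach0 : reach w w [::]
| reachS O E O' E' : reach w O E -> psi_step O E O' E' -> reach w O' E'.

(* expected Lyndon factorization of O' *)
Definition new_fact (fs : seq word) (k : kind) : seq word :=
  match k with
  | KS r _ => rcons (take (size fs).-1 fs) r
  | KP _ s => rcons (take (size fs).-1 fs) s
  | KF => take (size fs - 2) fs
  end.

End Words.

From mathcomp Require Import all_boot all_order.
From mathcomp Require Import zify.
Set Implicit Arguments. Unset Strict Implicit. Unset Printing Implicit Defensive.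
Import Order.TTheory.

(* Along the computation of Psi(w) an invariant is maintained: the Lyndon factors o_1 > ... > o_m
   of O are odd and distinct, E < o_{m-1}, and the Lyndon factors of E are even and split as
   vs ++ gs, where every word of vs is at most every Lyndon proper suffix of o_m and gs < o_m vs.
   Each of the steps (S), (P), (F) preserves it, and items (i)-(vi) are read off along the way.
   Besides the basic combinatorics of Lyndon words (uv is Lyndon when u < v are Lyndon, a Lyndon
   word is below each proper suffix, the factorization is unique and built by merging from the
   left), the argument only uses two consequences of the maximality of s in o_m = rs: r is
   Lyndon, and s is at most every Lyndon proper suffix of r. *)

Section LyndonWords.
Context {d : Order.disp_t} {A : finOrderType d}.
Implicit Types u v x y p t w l r s E : seq A.
Implicit Types fs vs gs : seq (seq A).

Lemma lexltxx u : lexlt u u = false.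
Proof. by elim: u => //= a u ->; rewrite ltxx eqxx. Qed.

Lemma lexlt_trans v u x : lexlt u v -> lexlt v x -> lexlt u x.
Proof.
elim: u v x => [|a u IH] [|b v] [|c x] //=.
case/orP=> [ab|/andP[/eqP <- uv]]; case/orP=> [bc|/andP[/eqP <- vx]].
- by rewrite (lt_trans ab bc).
- by rewrite ab.
- by rewrite bc.
- by rewrite eqxx (IH _ _ uv vx) orbT.
Qed.

Lemma lexlt_total u v : u != v -> lexlt u v || lexlt v u.
Proof.
elim: u v => [|a u IH] [|b v] //=.
case: (eqVneq a b) => [<-|ab]; first by rewrite eqseq_cons eqxx ltxx => /IH.
by move=> _; case/orP: (lt_total ab) => ->; rewrite ?orbT.
Qed.

Lemma lexlt_cat2l p u v : lexlt (p ++ u) (p ++ v) = lexlt u v.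
Proof. by elim: p => //= a p ->; rewrite ltxx eqxx. Qed.

Lemma lexlt_prefix u t : t != [::] -> lexlt u (u ++ t).
Proof. by elim: u => [|a u IH] /=; [case: t | move=> /IH ->; rewrite eqxx orbT]. Qed.

Lemma lexlt_prefix_or_mismatch u v : lexlt u v ->
  (exists t, v = u ++ t) \/ (forall x y, lexlt (u ++ x) (v ++ y)).
Proof.
elim: u v => [|a u IH] [|b v] //=; first by left; exists (b :: v).
case/orP=> [ab|/andP[/eqP <- /IH [[t ->]|uv]]].
- by right=> x y; rewrite ab.
- by left; exists t.
- by right=> x y; rewrite ltxx eqxx uv.
Qed.

Lemma lexlt_mismatch u v : lexlt u v -> size v <= size u ->
  forall x y, lexlt (u ++ x) (v ++ y).
Proof.
move=> uv; case: (lexlt_prefix_or_mismatch uv) => [[[|c t] ev]|//].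
  by move: uv; rewrite ev cats0 lexltxx.
by rewrite ev size_cat /= addnS ltnNge leq_addr.
Qed.

Lemma lexlexx u : lexle u u.
Proof. by rewrite /lexle eqxx. Qed.

Lemma lexltW u v : lexlt u v -> lexle u v.
Proof. by move=> uv; rewrite /lexle uv orbT. Qed.

Lemma lexle_lt_trans v u x : lexle u v -> lexlt v x -> lexlt u x.
Proof. by case/orP=> [/eqP ->//|]; apply: lexlt_trans. Qed.

Lemma lexlt_le_trans v u x : lexlt u v -> lexle v x -> lexlt u x.
Proof. by move=> uv /orP[/eqP <-//|]; apply: lexlt_trans. Qed.

Lemma lexle_trans v u x : lexle u v -> lexle v x -> lexle u x.
Proof. by case/orP=> [/eqP ->//|uv vx]; apply/lexltW/(lexlt_le_trans uv). Qed.

Lemma lexle_prefix u t : lexle u (u ++ t).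
Proof. by case: t => [|c t]; rewrite ?cats0 ?lexlexx // lexltW ?lexlt_prefix. Qed.

Lemma lexleNgt u v : lexle u v = ~~ lexlt v u.
Proof.
rewrite /lexle; case: (eqVneq u v) => [->|/lexlt_total]; first by rewrite lexltxx.
case: (boolP (lexlt u v)) => [uv _|_ /= ->//].
by apply/esym/negP => /(lexlt_trans uv); rewrite lexltxx.
Qed.

Lemma lexle_neq_lt u v : lexle u v -> u != v -> lexlt u v.
Proof. by case/orP=> [/eqP ->|//]; rewrite eqxx. Qed.

Lemma cat_eq_cat x t g X : x ++ t = g ++ X ->
  (exists t', g = x ++ t' /\ t = t' ++ X) \/ (exists x', x = g ++ x' /\ X = x' ++ t).
Proof.
elim: x g => [|a x IH] [|b g] /=.
- by move=> ->; left; exists [::].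
- by move=> ->; left; exists (b :: g).
- by move=> <-; right; exists (a :: x).
- by case=> <- /IH [[t' [-> ->]]|[x' [-> ->]]]; [left; exists t' | right; exists x'].
Qed.

Lemma lyndon_neq0 u : lyndon u -> u != [::].
Proof. by case/andP. Qed.

Lemma lyndon_size_gt0 u : lyndon u -> 0 < size u.
Proof. by case: u. Qed.

Lemma lyndonP u k : lyndon u -> 0 < k < size u -> lexlt u (drop k u).
Proof.
case/andP=> _ /allP lt_drop /andP[k0 ku]; apply: lt_drop.
by rewrite mem_iota k0 add1n prednK // (ltn_trans k0 ku).
Qed.

Lemma lyndonI u : u != [::] -> (forall k, 0 < k < size u -> lexlt u (drop k u)) -> lyndon u.
Proof.
move=> u0 lt_drop; apply/andP; split=> //; apply/allP=> k; rewrite mem_iota.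
by move=> /andP[k0 ku]; apply: lt_drop; rewrite k0 /=; move: ku; case: (size u) => //= m; lia.
Qed.

Lemma lyndon1 (a : A) : lyndon [:: a].
Proof. by []. Qed.

Lemma lyndon_lt_suffix x y : lyndon (x ++ y) -> x != [::] -> y != [::] -> lexlt (x ++ y) y.
Proof.
move=> Lxy x0 y0; rewrite -{2}(drop_size_cat y (erefl (size x))).
apply: lyndonP; rewrite // size_cat.
by case: x {Lxy} x0 => // a x _; case: y y0 => // b y _; rewrite /= addnS ltnS leq_addr.
Qed.

Lemma lyndon_lt_suffix_cat x y : lyndon (x ++ y) -> x != [::] -> y != [::] ->
  forall a b, lexlt ((x ++ y) ++ a) (y ++ b).
Proof.
by move=> Lxy x0 y0; apply: lexlt_mismatch; rewrite ?lyndon_lt_suffix // size_cat leq_addl.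
Qed.

Lemma lexlt_cat_lyndon x u E : lyndon x -> lexlt u x -> lexlt E x -> lexlt (u ++ E) x.
Proof.
move=> Lx ux Ex; case: (eqVneq u [::]) => [-> //|u0].
case: (lexlt_prefix_or_mismatch ux) => [[[|c t] ex]|uxE]; last by have := uxE E [::]; rewrite cats0.
  by move: ux; rewrite ex cats0 lexltxx.
rewrite {1}ex lexlt_cat2l; apply: lexlt_trans Ex _.
by rewrite {1}ex; apply: lyndon_lt_suffix; rewrite -?ex.
Qed.

Lemma lexlt_flatten_lyndon x vs E : lyndon x -> all (lexlt^~ x) vs -> lexlt E x ->
  lexlt (flatten vs ++ E) x.
Proof.
move=> Lx; elim: vs => [|v vs IH] //= /andP[vx vsx] Ex.
by rewrite -catA; apply: lexlt_cat_lyndon => //; apply: IH.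
Qed.

Lemma lyndon_cat u v : lyndon u -> lyndon v -> lexlt u v -> lyndon (u ++ v).
Proof.
move=> Lu Lv uv; have u0 := lyndon_neq0 Lu.
have uv_v : lexlt (u ++ v) v.
  case: (lexlt_prefix_or_mismatch uv) => [[[|c t] ev]|uvE]; last by have := uvE v [::]; rewrite cats0.
    by move: uv; rewrite ev cats0 lexltxx.
  by rewrite {2}ev lexlt_cat2l {1}ev; apply: lyndon_lt_suffix; rewrite -?ev.
apply: lyndonI => [|k /andP[k0 ku]]; first by rewrite -size_eq0 size_cat addn_eq0 size_eq0 (negbTE u0).
rewrite drop_cat; case: ltngtP => hk.
- by apply: lexlt_mismatch; rewrite ?lyndonP ?k0 // size_drop leq_subr.
- by apply: lexlt_trans uv_v (lyndonP Lv _); rewrite size_cat in ku; lia.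
- by rewrite hk subnn drop0.
Qed.

(** * Lyndon factorization *)

Definition lexge : rel (seq A) := fun x y => lexle y x.

Lemma lexge_trans : transitive lexge.
Proof. by move=> y x z xy yz; apply: lexle_trans yz xy. Qed.

Lemma lfact_flatten w fs : lfact w fs -> w = flatten fs.
Proof. by case/and3P=> _ _ /eqP. Qed.

Lemma lfact_cons u fs : lyndon u -> lfact (flatten fs) fs -> lexle (head u fs) u ->
  lfact (u ++ flatten fs) (u :: fs).
Proof.
move=> Lu /and3P[Lfs Sfs _] hd; apply/and3P; split=> //=; first by rewrite Lu.
by case: fs Sfs hd {Lfs} => //= f fs' -> ->.
Qed.

Lemma lfact_behead f fs w : lfact w (f :: fs) -> lfact (flatten fs) fs.
Proof. by case/and3P=> /andP[_ L] /path_sorted S _; apply/and3P. Qed.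

Lemma lfact_rcons fs u :
  lfact (flatten (rcons fs u)) (rcons fs u) = [&& lfact (flatten fs) fs, lyndon u & all (lexle u) fs].
Proof.
rewrite /lfact !eqxx !andbT all_rcons (sorted_pairwise lexge_trans) pairwise_rcons.
rewrite -(sorted_pairwise lexge_trans).
by case: (lyndon u); case: (all lyndon fs); rewrite //= andbC.
Qed.

Lemma lfact_lyndon u : lyndon u -> lfact u [:: u].
Proof. by move=> Lu; rewrite /lfact /= Lu cats0 eqxx. Qed.

Fixpoint lmerge (u : seq A) (fs : seq (seq A)) : seq (seq A) :=
  match fs with
  | [::] => [:: u]
  | f :: fs' => if lexlt u f then lmerge (u ++ f) fs' else u :: fs
  end.

Lemma lfact_lmerge u W fs : lyndon u -> lfact W fs -> lfact (u ++ W) (lmerge u fs).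
Proof.
elim: fs u W => [|f fs IH] u W Lu Hf /=; have eW := lfact_flatten Hf; subst W.
  by rewrite /lfact /= Lu !cats0 eqxx.
have Lf : lyndon f by case/and3P: Hf => /andP[].
case: ifP => uf; first by rewrite catA; apply/IH/(lfact_behead Hf)/lyndon_cat.
by apply: lfact_cons; rewrite //= lexleNgt uf.
Qed.

Lemma lfact_exists w : exists fs, lfact w fs.
Proof.
elim: w => [|a w [fs H]]; first by exists [::].
by exists (lmerge [:: a] fs); apply: (lfact_lmerge (lyndon1 a) H).
Qed.

Lemma all_lmerge (P : pred (seq A)) u fs : (forall x y, P x -> P y -> P (x ++ y)) ->
  P u -> all P fs -> all P (lmerge u fs).
Proof.
move=> PD; elim: fs u => [|f fs IH] u Pu /=; first by rewrite Pu.
by case/andP=> Pf Pfs; case: ifP => _; [apply: IH => //; apply: PD | rewrite /= Pu Pf].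
Qed.

Lemma head_lmerge u fs : exists t, head [::] (lmerge u fs) = u ++ t.
Proof.
elim: fs u => [|f fs IH] u /=; first by exists [::]; rewrite cats0.
case: ifP => _ /=; last by exists [::]; rewrite cats0.
by case: (IH (u ++ f)) => t ->; exists (f ++ t); rewrite catA.
Qed.

Lemma prefix_flatten x t fs : all lyndon fs -> x != [::] -> x ++ t = flatten fs ->
  exists y z g t', [/\ x = y ++ z, z != [::], g \in fs & g = z ++ t'].
Proof.
elim: fs x t => [|g fs IH] x t /=.
  by move=> _ + /(congr1 size); rewrite size_cat -size_eq0; case: (size x).
case/andP=> Lg Lfs x0 /cat_eq_cat [[t' [-> _]]|[x' [ex ef]]].
  by exists [::], x, (x ++ t'), t'; rewrite mem_head.
case: (eqVneq x' [::]) => [ex'|x'0].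
  by exists [::], x, g, [::]; split; rewrite ?mem_head // ex ex' !cats0.
case: (IH x' t Lfs x'0 (esym ef)) => y [z [g' [t'' [ex' z0 gin eg]]]].
by exists (g ++ y), z, g', t''; rewrite in_cons gin orbT ex ex' catA.
Qed.

Lemma lfact_head_longest w f fs u t : lfact w (f :: fs) -> lyndon u -> w = u ++ t ->
  size u <= size f.
Proof.
move=> H Lu ew; rewrite leqNgt; apply/negP => hlt.
case/and3P: H => /andP[Lf Lfs] S /eqP ef.
move: ew; rewrite -ef /= => /esym /cat_eq_cat [[t' [eu _]]|[x' [eu ex]]].
  by move: hlt; rewrite eu size_cat ltnNge leq_addr.
have x'0 : x' != [::] by move: hlt; rewrite eu size_cat; case: x' {eu ex} => //; rewrite addn0 ltnn.
case: (prefix_flatten Lfs x'0 (esym ex)) => y [z [g [t'' [exy z0 gin eg]]]].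
have uz : lexlt u z.
  move: Lu; rewrite eu exy catA => Lu; apply: lyndon_lt_suffix Lu _ z0.
  by rewrite -size_eq0 size_cat addn_eq0 size_eq0 (negbTE (lyndon_neq0 Lf)).
have gf : lexle g f by have /allP := order_path_min lexge_trans S; apply.
have zg : lexle z g by rewrite eg lexle_prefix.
have fu : lexle f u by rewrite eu lexle_prefix.
by have := lexlt_le_trans uz (lexle_trans zg (lexle_trans gf fu)); rewrite lexltxx.
Qed.

Lemma lfact_uniq w fs gs : lfact w fs -> lfact w gs -> fs = gs.
Proof.
elim: fs w gs => [|f fs IH] w [|g gs] //.
- move=> /lfact_flatten -> /and3P[/andP[/lyndon_neq0 + _] _ /eqP /(congr1 size)] /=.
  by rewrite size_cat -size_eq0; case: (size g).
- move=> /and3P[/andP[/lyndon_neq0 + _] _ /eqP <-] /lfact_flatten /(congr1 size) /=.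
  by rewrite size_cat -size_eq0; case: (size f).
move=> Hf Hg; have Lf : lyndon f by case/and3P: Hf => /andP[].
have Lg : lyndon g by case/and3P: Hg => /andP[].
have ef := lfact_flatten Hf; have eg := lfact_flatten Hg.
have szfg : size f = size g.
  by apply/eqP; rewrite eqn_leq (lfact_head_longest Hf Lg eg) (lfact_head_longest Hg Lf ef).
have /andP[/eqP efg /eqP eflat] : (f == g) && (flatten fs == flatten gs).
  by rewrite -eqseq_cat // -[f ++ _]ef -[g ++ _]eg.
by rewrite efg (IH _ gs (lfact_behead Hf)) // eflat; apply: lfact_behead Hg.
Qed.

(** * Standard factorization *)

Lemma std_fact_neq0 l r s : std_fact l r s -> l != [::].
Proof. by case=> -> r0 _ _ _; case: r r0. Qed.

Lemma std_fact_lt l r s : lyndon l -> std_fact l r s -> lexlt r l /\ lexlt l s.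
Proof.
move=> Ll [el r0 s0 _ _]; rewrite el lexlt_prefix //.
by split=> //; apply: lyndon_lt_suffix; rewrite -?el.
Qed.

Lemma std_fact_le_suffix l r s k : std_fact l r s -> 0 < k < size r -> lyndon (drop k r) ->
  lexle s (drop k r).
Proof.
case=> el _ _ Ls longest /andP[k0 kr] Ly; rewrite lexleNgt; apply/negP => ys.
have := longest k; rewrite el drop_cat kr => /(_ _ (lyndon_cat Ly Ls ys)).
by rewrite !size_cat size_drop; lia.
Qed.

(* If the last Lyndon factor [rk] of [r] were smaller than [s], then [rk s] would be a longer
   Lyndon suffix of [l]; otherwise [l] would have at least two Lyndon factors. *)
Lemma std_fact_lyndon l r s : lyndon l -> std_fact l r s -> lyndon r.
Proof.
move=> Ll [el r0 s0 Ls longest]; have [fr Hr] := lfact_exists r.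
case/lastP: fr Hr => [|fr1 rk] Hr; first by move: r0; rewrite (lfact_flatten Hr).
have er : r = flatten fr1 ++ rk by rewrite (lfact_flatten Hr) flatten_rcons.
have /and3P[_ Lrk rk_fr1] : [&& lfact (flatten fr1) fr1, lyndon rk & all (lexle rk) fr1].
  by rewrite -lfact_rcons -(lfact_flatten Hr).
case: (posnP (size (flatten fr1))) => [/eqP|fr1_gt0]; first by rewrite size_eq0 er => /eqP ->.
case: (boolP (lexlt rk s)) => [rk_s|].
  have := longest (size (flatten fr1)); rewrite el er -catA drop_size_cat //.
  move/(_ _ (lyndon_cat Lrk Ls rk_s)); move: (lyndon_size_gt0 Lrk).
  by rewrite !size_cat; lia.
rewrite -lexleNgt => s_rk.
have Hl : lfact l (rcons (rcons fr1 rk) s).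
  rewrite (_ : l = flatten (rcons (rcons fr1 rk) s)); last by rewrite !flatten_rcons -er.
  rewrite lfact_rcons -(lfact_flatten Hr) Hr Ls all_rcons s_rk /=.
  by apply/allP=> x /(allP rk_fr1); apply: lexle_trans.
by have := congr1 size (lfact_uniq Hl (lfact_lyndon Ll)); rewrite !size_rcons.
Qed.

Lemma all_lexlt_le u fs : all (lexlt u) fs = all (lexle u) fs && (u \notin fs).
Proof.
elim: fs => //= f fs ->; rewrite in_cons negb_or /lexle eq_sym.
by case: (eqVneq f u) => [->|]; rewrite ?lexltxx ?andbF //= andbA.
Qed.

Lemma take_rcons_pred fs u : take (size (rcons fs u)).-1 (rcons fs u) = fs.
Proof. by rewrite size_rcons -cats1 take_size_cat. Qed.

Lemma take_rcons2 fs a b : take (size (rcons (rcons fs a) b) - 2) (rcons (rcons fs a) b) = fs.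
Proof. by rewrite !size_rcons subSS subSS subn0 -!cats1 -catA take_size_cat. Qed.

Lemma nth_rcons2 fs a b : nth [::] (rcons (rcons fs a) b) (size (rcons (rcons fs a) b) - 2) = a.
Proof. by rewrite !size_rcons subSS subSS subn0 !nth_rcons size_rcons ltnSn ltnn eqxx. Qed.

Lemma oidx_rcons fs u : oidx (rcons fs u) (size (rcons fs u)).-1 = oidx fs (size fs).
Proof. by rewrite size_rcons /=; case: (size fs) (nth_rcons [::] fs u) => //= n ->; rewrite ltnSn. Qed.

Lemma oidx_rcons_last fs u : oidx (rcons fs u) (size (rcons fs u)) = Some u.
Proof. by rewrite size_rcons /= nth_rcons ltnn eqxx. Qed.

Lemma olt_oidx u fs i : all (lexlt u) fs -> i <= size fs -> olt (Some u) (oidx fs i).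
Proof. by case: i => //= i /allP ufs i_fs; apply/ufs/mem_nth. Qed.

Lemma olt_oidx_cat u E fs : all lyndon fs ->
  olt (Some u) (oidx fs (size fs)) -> olt (Some E) (oidx fs (size fs)) ->
  olt (Some (u ++ E)) (oidx fs (size fs)).
Proof.
case: fs => // f fs /allP Lfs /=; apply: lexlt_cat_lyndon; exact/Lfs/mem_nth.
Qed.

Lemma olt_last_lfact u fs : lfact (flatten fs) fs -> olt (Some u) (oidx fs (size fs)) ->
  all (lexlt u) fs.
Proof.
case/lastP: fs => //= fs x; rewrite lfact_rcons size_rcons /= nth_rcons ltnn eqxx.
case/and3P=> _ _ /allP x_fs ux; rewrite all_rcons ux /=.
by apply/allP=> y /x_fs; apply: lexlt_le_trans ux.
Qed.

(** * The invariant of the step (psi) *)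

Definition odd_uniq_lfact fs := [&& lfact (flatten fs) fs, all oddw fs & uniq fs].

Lemma odd_uniq_lfact_lyndon fs : odd_uniq_lfact fs -> all lyndon fs.
Proof. by case/and3P=> /and3P[]. Qed.

Lemma odd_uniq_lfact_rcons fs u : odd_uniq_lfact (rcons fs u) =
  [&& odd_uniq_lfact fs, lyndon u, oddw u & all (lexlt u) fs].
Proof.
rewrite /odd_uniq_lfact lfact_rcons all_rcons rcons_uniq all_lexlt_le.
case: (lfact _ _); case: (lyndon u); case: (oddw u); rewrite //= ?andbF //.
by case: (all (lexle u) fs); case: (all oddw fs); rewrite //= andbC.
Qed.

Definition even_factors E := forall fsE, lfact E fsE -> all (fun u => ~~ oddw u) fsE.

Lemma even_factorsP E fsE : lfact E fsE -> all (fun u => ~~ oddw u) fsE -> even_factors E.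
Proof. by move=> HE Ev fsE' /lfact_uniq /(_ HE) ->. Qed.

Lemma lfact_cat_even u E : lyndon u -> ~~ oddw u -> even_factors E ->
  forall fsE, lfact (u ++ E) fsE -> all (fun u => ~~ oddw u) fsE /\ size u <= size (head [::] fsE).
Proof.
move=> Lu eu EvE fsE HuE; have [fsE0 HE] := lfact_exists E.
rewrite (lfact_uniq HuE (lfact_lmerge Lu HE)); split.
  apply: all_lmerge (EvE _ HE) => // x y; rewrite /oddw size_cat oddD.
  by move=> /negbTE -> /negbTE ->.
by have [t ->] := head_lmerge u fsE0; rewrite size_cat leq_addr.
Qed.

(* [vs] collects the suffixes [s] pushed onto [E] by the (S) steps since [om] became the last
   factor of [O]; [gs] is the older part of [E]. *)
Definition tail_split om E : Prop :=
  exists vs gs, [/\ lfact E (vs ++ gs), all (fun u => ~~ oddw u) (vs ++ gs),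
    om != [::] -> lexlt (flatten gs) (om ++ flatten vs) &
    forall k, 0 < k < size om -> lyndon (drop k om) -> all (lexle^~ (drop k om)) vs].

Lemma tail_split_even om E : tail_split om E -> even_factors E.
Proof. by case=> vs [gs [HE Ev _ _]]; apply: even_factorsP HE Ev. Qed.

Lemma tail_split_lt om E : even_factors E -> (om != [::] -> lexlt E om) -> tail_split om E.
Proof.
move=> EvE Eom; have [fsE HE] := lfact_exists E.
by exists [::], fsE; rewrite /= cats0 -(lfact_flatten HE); split=> //; apply: EvE.
Qed.

Lemma tail_split_le_std om r s vs : std_fact om r s ->
  (forall k, 0 < k < size om -> lyndon (drop k om) -> all (lexle^~ (drop k om)) vs) ->
  all (lexle^~ s) vs.
Proof.
move=> [eom r0 _ Ls _] Hvs; have ds : drop (size r) om = s by rewrite eom drop_size_cat.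
rewrite -ds; apply: Hvs; rewrite ?ds // eom size_cat lt0n size_eq0 r0 /=.
by rewrite -[X in X < _]addn0 ltn_add2l lyndon_size_gt0.
Qed.

Lemma tail_split_lt_std om r s E : lyndon om -> std_fact om r s -> oddw s ->
  tail_split om E -> lexlt E s.
Proof.
move=> Lom st os [vs [gs [HE Ev gs_lt vs_le]]]; have [eom r0 s0 Ls _] := st.
rewrite (lfact_flatten HE) flatten_cat; apply: lexlt_flatten_lyndon => //.
  apply/allP=> v vin; apply: lexle_neq_lt; first exact: (allP (tail_split_le_std st vs_le)).
  by apply: contraTneq os => <-; apply: (allP Ev); rewrite mem_cat vin.
apply: lexlt_trans (gs_lt (lyndon_neq0 Lom)) _.
by rewrite -[s]cats0 {1}eom; apply: lyndon_lt_suffix_cat; rewrite -?eom.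
Qed.

Lemma tail_split_push om r s E : lyndon om -> std_fact om r s -> ~~ oddw s ->
  tail_split om E -> tail_split r (s ++ E) /\ forall fsE, lfact (s ++ E) fsE -> head [::] fsE = s.
Proof.
move=> Lom st es [vs [gs [HE Ev gs_lt vs_le]]]; have [eom _ _ Ls _] := st.
have vs_s := tail_split_le_std st vs_le.
have HsE : lfact (s ++ E) (s :: vs ++ gs).
  rewrite (lfact_flatten HE); apply: lfact_cons; rewrite -?(lfact_flatten HE) //.
  case: vs vs_s gs_lt {vs_le Ev HE} => [_|v vs /andP[] //] /= /(_ (lyndon_neq0 Lom)).
  case: gs => [_|g gs]; rewrite /= ?lexlexx // cats0 => g_om; apply: lexltW.
  apply: lexle_lt_trans (lexle_prefix g (flatten gs)) (lexlt_trans g_om _).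
  by case: (std_fact_lt Lom st).
split; last by move=> fsE /lfact_uniq /(_ HsE) ->.
exists (s :: vs), gs; split=> //.
- by rewrite /= es.
- by move=> _; rewrite /= catA -eom; apply: gs_lt (lyndon_neq0 Lom).
move=> k kr Ly; have s_y := std_fact_le_suffix st kr Ly; rewrite /= s_y /=.
by apply/allP=> v /(allP vs_s) v_s; apply: lexle_trans v_s s_y.
Qed.

Record psi_inv fs E : Prop := PsiInv {
  psi_inv_fact : odd_uniq_lfact fs;
  psi_inv_prev : olt (Some E) (oidx fs (size fs).-1);
  psi_inv_tail : tail_split (last [::] fs) E }.

(* Items (iii)-(vi) of the lemma; (i) and (ii) are the first two fields of [psi_inv] for the new state. *)
Definition psi_step_props fs E E' l k : Prop :=
  let fs' := new_fact fs k in
  let h := size fs' in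
  (k = KF -> olt (Some E') (oidx fs' h)) /\
  (forall r s, k = KP r s -> olt (Some E') (oidx fs' h) /\ olt (Some E) (oidx fs' h)) /\
  (forall r s, k = KS r s ->
     (forall fsE, lfact E' fsE -> head [::] fsE = s) /\
     olt (oidx fs' h) (Some s) /\ lexle s E') /\
  (forall fsE, lfact E' fsE ->
     all (fun u => ~~ oddw u) fsE /\ size l <= size (head [::] fsE)).

Lemma psi_inv_stepS fs om E r s : psi_inv (rcons fs om) E -> std_fact om r s ->
  olt (Some s) (oidx fs (size fs)) -> odd (size r) ->
  psi_inv (rcons fs r) (s ++ E) /\ psi_step_props (rcons fs om) E (s ++ E) s (KS r s).
Proof.
case; rewrite odd_uniq_lfact_rcons oidx_rcons last_rcons.
move=> /and4P[Ofs Lom oom om_fs] E_prev tail st s_prev or; have [eom _ _ _ _] := st.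
have [r_om om_s] := std_fact_lt Lom st.
have es : ~~ oddw s by move: oom; rewrite /oddw eom size_cat oddD or.
have [tail' head_s] := tail_split_push Lom st es tail.
split.
  split; rewrite ?oidx_rcons ?last_rcons //; last first.
    by apply: olt_oidx_cat E_prev; rewrite ?odd_uniq_lfact_lyndon.
  rewrite odd_uniq_lfact_rcons Ofs (std_fact_lyndon Lom st) /oddw or /=.
  by apply/allP=> x /(allP om_fs); apply: lexlt_trans r_om.
rewrite /psi_step_props /new_fact take_rcons_pred oidx_rcons_last.
do 2!split=> //; split=> [_ _ [_ <-]|fsE HsE].
  by split=> //=; rewrite lexle_prefix (lexlt_trans r_om om_s).
by rewrite (head_s _ HsE) leqnn (tail_split_even tail' HsE).
Qed.

Lemma psi_inv_stepP fs om E r s : psi_inv (rcons fs om) E -> std_fact om r s ->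
  olt (Some s) (oidx fs (size fs)) -> ~~ odd (size r) ->
  psi_inv (rcons fs s) (r ++ E) /\ psi_step_props (rcons fs om) E (r ++ E) r (KP r s).
Proof.
case; rewrite odd_uniq_lfact_rcons oidx_rcons last_rcons.
move=> /and4P[Ofs Lom oom om_fs] E_prev tail st s_prev er; have [eom _ _ Ls _] := st.
have Lr := std_fact_lyndon Lom st.
have [r_om om_s] := std_fact_lt Lom st.
have os : oddw s by move: oom; rewrite /oddw eom size_cat oddD (negbTE er).
have E_s := tail_split_lt_std Lom st os tail.
have rE_s : lexlt (r ++ E) s by apply: lexlt_cat_lyndon; rewrite ?(lexlt_trans r_om om_s).
have /and3P[Lfs _ _] := Ofs; have s_fs := olt_last_lfact Lfs s_prev.
have r_fs : all (lexlt r) fs by apply/allP=> x /(allP om_fs); apply: lexlt_trans r_om.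
have Ev := lfact_cat_even Lr er (tail_split_even tail).
split.
  split; rewrite ?oidx_rcons ?last_rcons ?odd_uniq_lfact_rcons ?Ofs ?Ls ?os ?s_fs //.
    by apply: olt_oidx_cat E_prev; rewrite ?odd_uniq_lfact_lyndon ?olt_oidx.
  by apply: tail_split_lt => // fsE /Ev[].
rewrite /psi_step_props /new_fact take_rcons_pred oidx_rcons_last.
by do 2!split=> //; split=> // [_ _ [<- <-]].
Qed.

Lemma psi_inv_stepF fs a b E : psi_inv (rcons (rcons fs a) b) E ->
  psi_inv fs (b ++ a ++ E) /\ psi_step_props (rcons (rcons fs a) b) E (b ++ a ++ E) (b ++ a) KF.
Proof.
case; rewrite odd_uniq_lfact_rcons odd_uniq_lfact_rcons oidx_rcons oidx_rcons_last last_rcons /=.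
move=> /and4P[/and4P[Ofs La oa a_fs] Lb ob]; rewrite all_rcons => /andP[b_a b_fs] E_a tail.
have Lfs := odd_uniq_lfact_lyndon Ofs.
have Ev : forall fsE, lfact (b ++ a ++ E) fsE ->
    all (fun u => ~~ oddw u) fsE /\ size (b ++ a) <= size (head [::] fsE).
  rewrite catA; apply: lfact_cat_even (tail_split_even tail); first exact: lyndon_cat.
  by move: ob oa; rewrite /oddw size_cat oddD => -> ->.
have E'_fs : all (lexlt (b ++ a ++ E)) fs.
  apply/allP=> x xin; have Lx := allP Lfs x xin; have a_x := allP a_fs x xin.
  rewrite catA; apply: lexlt_cat_lyndon (lexlt_trans E_a a_x) => //.
  by apply: lexlt_cat_lyndon; rewrite ?(allP b_fs).
split.
  split=> //; first exact: olt_oidx E'_fs (leq_pred _).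
  apply: tail_split_lt => [fsE /Ev[] //|last0]; apply: (allP E'_fs).
  by move: (mem_last [::] fs); rewrite in_cons (negbTE last0).
rewrite /psi_step_props /new_fact take_rcons2.
by split=> [_|]; [apply: olt_oidx|split].
Qed.

Lemma psi_data_flatten fs E O' E' l k : psi_data fs E O' E' l k -> O' = flatten (new_fact fs k).
Proof. by case=> *; rewrite /new_fact ?flatten_rcons. Qed.

Lemma psi_inv_step fs E O' E' l k : psi_inv fs E -> psi_data fs E O' E' l k ->
  psi_inv (new_fact fs k) E' /\ psi_step_props fs E E' l k.
Proof.
move=> I; case=> [r s st s_prev or|r s st s_prev er|fs_ge2 _].
- case/lastP: fs I st s_prev => [|fs om] I st; first by have := std_fact_neq0 st.
  rewrite last_rcons in st; rewrite oidx_rcons /new_fact take_rcons_pred => s_prev.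
  exact: psi_inv_stepS I st s_prev or.
- case/lastP: fs I st s_prev => [|fs om] I st; first by have := std_fact_neq0 st.
  rewrite last_rcons in st; rewrite oidx_rcons /new_fact take_rcons_pred => s_prev.
  exact: psi_inv_stepP I st s_prev er.
- case/lastP: fs I fs_ge2 => [|fs b] //; case/lastP: fs => [|fs a] // I _.
  by rewrite last_rcons nth_rcons2 /new_fact take_rcons2; apply: psi_inv_stepF.
Qed.

Lemma reach_psi_inv n w O E fs : Wo n w -> reach w O E -> lfact O fs -> psi_inv fs E.
Proof.
case=> _ [fs0 /and3P[L0 O0 U0]] R; elim: R fs => [|O1 E1 O2 E2 _ IH [_ [fs1 [l [k [L1 D]]]]]] fs Lfs.
  rewrite (lfact_uniq Lfs L0); have /and3P[/allP Lfs0 _ _] := L0; split.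
  - by rewrite /odd_uniq_lfact -(lfact_flatten L0) L0 O0 U0.
  - by apply: olt_oidx (leq_pred _); apply/allP=> x /Lfs0 /lyndon_neq0; case: x.
  apply: tail_split_lt => [fsE|]; last by case: last.
  by move=> HE; rewrite (lfact_uniq HE (_ : lfact [::] [::])).
have [I' _] := psi_inv_step (IH _ L1) D.
suff Lnew : lfact O2 (new_fact fs1 k) by rewrite (lfact_uniq Lfs Lnew).
by case: I' => /and3P[+ _ _] _ _; rewrite -(psi_data_flatten D).
Qed.

End LyndonWords.

Theorem lemma4p21 (d : Order.disp_t) (A : finOrderType d) (n : nat) (w : seq A)
  (O E : seq A) (fs : seq (seq A)) (O' E' l : seq A) (k : kind) :
  Wo n w -> reach w O E -> 2 <= size O -> lfact O fs ->
  psi_data fs E O' E' l k ->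
  let fs' := new_fact fs k in
  let h := size fs' in
  (* (i) *)
  [/\ lfact O' fs', all oddw fs' & uniq fs'] /\
  (* (ii) *)
  olt (Some E') (oidx fs' h.-1) /\
  (* (iii) *)
  (k = KF -> olt (Some E') (oidx fs' h)) /\
  (* (iv) *)
  (forall r s, k = KP r s -> olt (Some E') (oidx fs' h) /\ olt (Some E) (oidx fs' h)) /\
  (* (v) *)
  (forall r s, k = KS r s ->
     (forall fsE, lfact E' fsE -> head [::] fsE = s) /\
     olt (oidx fs' h) (Some s) /\ lexle s E') /\
  (* (vi) *)
  (forall fsE, lfact E' fsE ->
     all (fun u => ~~ oddw u) fsE /\ size l <= size (head [::] fsE)).
Proof.
move=> Hw Hr _ Hfs Hp.
have [[/and3P[L' Odd' U'] prev _] extra] := psi_inv_step (reach_psi_inv Hw Hr Hfs) Hp.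
by rewrite -(psi_data_flatten Hp) in L'.
Qed.
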